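(* Let $(X,\mathcal{M})$ be a measurable space and $K_x(dx')$ a probability kernel from $X$ to $X$. Define $S_K[f](x)=\int f(x')K_x(dx')$ for $f\in\mathcal{M}_b(X)$, $S^K[P]=\int K_x(\cdot)P(dx)$ for $P\in\mathcal{P}(X)$, and $\mathcal{P}_K(X)=\{P\in\mathcal{P}(X):S^K[P]=P\}$. Let $Q,P\in\mathcal{P}_K(X)$. (i) If $\Gamma\subset\mathcal{M}_b(X)$ with $S_K[\Gamma]\subset\Gamma$, then $D_f^\Gamma(Q\|P)=D_f^{S_K[\Gamma]}(Q\|P)$ and $W^\Gamma(Q,P)=W^{S_K[\Gamma]}(Q,P)$. (ii) If $\Gamma\subset\mathcal{M}_b(X)^2$ with $S_K[\Gamma]\subset\Gamma$ (componentwise) and the cost satisfies $S_K[c(\cdot,y)]=c(\cdot,y)$ and $S_K[c(x,\cdot)]=c(x,\cdot)$ for all $x,y\in X$, then $\mathcal{SD}^\Gamma_{c,\epsilon}(Q,P)=\mathcal{SD}^{S_K[\Gamma]}_{c,\epsilon}(Q,P)$. (iii) If moreover $S_K\circ S_K=S_K$ and $S_K[\Gamma]\subset\Gamma$, then $S_K[\Gamma]=\Gamma^{\mathrm{inv}}_K:=\{\gamma\in\Gamma:S_K[\gamma]=\gamma\}$.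
   Context: $f:[0,\infty)\to\mathbb{R}$ convex, lower semicontinuous, $f(1)=0$, strictly convex at $1$; $f^*$ its Legendre transform. $D_f^\Gamma(Q\|P)=\sup_{\gamma\in\Gamma}\{E_Q[\gamma]-\inf_{\nu\in\mathbb{R}}(\nu+E_P[f^*(\gamma-\nu)])\}$; $W^\Gamma(Q,P)=\sup_{\gamma\in\Gamma}\{E_Q[\gamma]-E_P[\gamma]\}$. For measurable cost $c:X\times X\to[0,\infty)$, $\epsilon>0$, $\Gamma$ a set of pairs: $W^\Gamma_{c,\epsilon}(Q,P)=\sup_{(\gamma_1,\gamma_2)\in\Gamma}\{E_P[\gamma_1]+E_Q[\gamma_2]-\epsilon E_{P\times Q}[\exp((\gamma_1(x)+\gamma_2(y)-c(x,y))/\epsilon)]+\epsilon\}$ and $\mathcal{SD}^\Gamma_{c,\epsilon}(Q,P)=W^\Gamma_{c,\epsilon}(Q,P)-\frac12W^\Gamma_{c,\epsilon}(Q,Q)-\frac12W^\Gamma_{c,\epsilon}(P,P)$. *)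

From mathcomp Require Import all_boot all_order all_algebra.
From mathcomp Require Import all_classical all_reals all_analysis.
Set Implicit Arguments. Unset Strict Implicit. Unset Printing Implicit Defensive.
Import Order.TTheory GRing.Theory Num.Theory.
Import numFieldNormedType.Exports.
Local Open Scope classical_set_scope.
Local Open Scope ring_scope.

Section Defs.
Context (R : realType).

(* Standing assumptions on f : [0,oo) -> R (values outside [0,oo) irrelevant). *)
Definition convex_on_nonneg (f : R -> R) :=
  forall x y t : R, 0 <= x -> 0 <= y -> 0 <= t <= 1 ->
    f (t * x + (1 - t) * y) <= t * f x + (1 - t) * f y.

Definition lsc_on_nonneg (f : R -> R) :=
  forall x : R, 0 <= x -> forall e : R, 0 < e ->
    exists2 delta : R, 0 < delta &
      forall y : R, 0 <= y -> `|y - x| < delta -> f x - e < f y.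

Definition strictly_convex_at_1 (f : R -> R) :=
  forall x y t : R, 0 <= x -> 0 <= y -> 0 < t < 1 -> x != y ->
    t * x + (1 - t) * y = 1 -> f 1 < t * f x + (1 - t) * f y.

Definition fdiv_admissible (f : R -> R) :=
  [/\ convex_on_nonneg f, lsc_on_nonneg f, f 1 = 0 & strictly_convex_at_1 f].

Definition legendre (f : R -> R) (y : R) : \bar R :=
  ereal_sup [set ((t * y - f t)%:E) | t in [set t : R | 0 <= t]].

Context (d : measure_display) (T : measurableType d).

Definition Mb : set (T -> R) :=
  [set g : T -> R | measurable_fun setT g /\ exists M : R, forall x, `|g x| <= M].

Definition Mb2 : set ((T -> R) * (T -> R)) := [set p | Mb p.1 /\ Mb p.2].

Definition SK (K : R.-pker T ~> T) (g : T -> R) : T -> R :=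
  fun x => fine (\int[K x]_y (g y)%:E)%E.

Definition SK2 (K : R.-pker T ~> T) (p : (T -> R) * (T -> R)) :=
  (SK K p.1, SK K p.2).

(* S_K[g] = g, for a possibly unbounded nonnegative g (integral in \bar R) *)
Definition SK_fixed (K : R.-pker T ~> T) (g : T -> R) :=
  forall x, (\int[K x]_y (g y)%:E)%E = (g x)%:E.

Definition stationary (K : R.-pker T ~> T) (P : probability T R) :=
  forall A : set T, measurable A -> (\int[P]_x K x A)%E = P A.

Local Open Scope ereal_scope.

Definition Df (f : R -> R) (G : set (T -> R)) (Q P : probability T R) : \bar R :=
  ereal_sup [set (\int[Q]_x (g x)%:E) -
      ereal_inf [set nu%:E + \int[P]_x legendre f (g x - nu) | nu in [set: R]]
    | g in G].

Definition IPM (G : set (T -> R)) (Q P : probability T R) : \bar R :=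
  ereal_sup [set (\int[Q]_x (g x)%:E) - (\int[P]_x (g x)%:E) | g in G].

Definition Wce (c : T * T -> R) (eps : R) (G : set ((T -> R) * (T -> R)))
    (Q P : probability T R) : \bar R :=
  ereal_sup [set (\int[P]_x (p.1 x)%:E) + (\int[Q]_y (p.2 y)%:E)
      - eps%:E * (\int[P \x Q]_z
           (expR ((p.1 z.1 + p.2 z.2 - c z) / eps))%:E) + eps%:E
    | p in G].

Definition SD (c : T * T -> R) (eps : R) (G : set ((T -> R) * (T -> R)))
    (Q P : probability T R) : \bar R :=
  Wce c eps G Q P - (2^-1)%:E * Wce c eps G Q Q - (2^-1)%:E * Wce c eps G P P.

End Defs.

From HB Require Import structures.
From mathcomp Require Import all_boot all_order all_algebra.
From mathcomp Require Import all_classical all_reals all_analysis.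
From mathcomp Require Import measurable_realfun giry.
Set Implicit Arguments. Unset Strict Implicit. Unset Printing Implicit Defensive.
Import Order.TTheory GRing.Theory Num.Theory.
Import numFieldNormedType.Exports.
Local Open Scope classical_set_scope.
Local Open Scope ring_scope.

(* Stationarity of P gives \int[P] \int[K x] F = \int[P] F, and Jensen's
   inequality for the probability measures K x shows that replacing a test
   function g by S_K g can only decrease the convex penalty of each variational
   formula: \int[P] f^*(g - nu) because f^* is a supremum of affine functions,
   and \int[P \x Q] exp((g1 + g2 - c) / eps) because exp is convex and c is
   S_K-invariant in each variable (Tonelli lets us average one variable at a
   time). The linear terms \int[Q] g are unchanged, so the supremum over Gamma
   equals the supremum over its subset S_K[Gamma]. For (iii), the
   image of a map that is idempotent on Gamma is its set of fixed points. *)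

Lemma ereal_sup_image_improving {R : realType} {A : Type} (G : set A) (S : A -> A)
    (V : A -> \bar R) :
  S @` G `<=` G -> (forall g, G g -> (V g <= V (S g))%E) ->
  ereal_sup [set V g | g in G] = ereal_sup [set V g | g in S @` G].
Proof.
move=> SG VS; apply/eqP; rewrite eq_le; apply/andP; split.
- apply: ge_ereal_sup => _ [g Gg <-]; apply: le_trans (VS g Gg) _.
  by apply: ereal_sup_ubound; exists (S g) => //; exists g.
- by apply: ereal_sup_le => _ [g SGg <-]; exists g => //; exact: SG.
Qed.

Lemma image_idem_fixed {A : Type} (S : A -> A) (G : set A) :
  (forall g, G g -> S (S g) = S g) -> S @` G `<=` G ->
  S @` G = [set g | G g /\ S g = g].
Proof.
move=> idem SG; apply/seteqP; split.
- by move=> _ [g Gg <-]; split; [apply: SG; exists g | exact: idem].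
- by move=> g [Gg Sgg]; exists g.
Qed.

Section legendre.
Context {R : realType} (f : R -> R).
Local Open Scope ereal_scope.

Lemma legendre_ge (t y : R) : (0 <= t)%R -> (t * y - f t)%:E <= legendre f y.
Proof. by move=> t0; apply: ereal_sup_ubound; exists t. Qed.

Lemma legendre_ge_f0 (y : R) : (- f 0)%:E <= legendre f y.
Proof. by have := legendre_ge y (lexx 0%R); rewrite mul0r add0r. Qed.

Lemma legendre_nondecreasing : {homo legendre f : x y / (x <= y)%R >-> x <= y}.
Proof.
move=> x y xy; apply: ge_ereal_sup => _ [t /= t0 <-].
by apply: le_trans (legendre_ge y t0); rewrite lee_fin lerD2r ler_wpM2l.
Qed.

Lemma measurable_legendre : measurable_fun [set: R] (legendre f).
Proof.
apply: (measurability _ (ErealGenOInfty.measurableE R)) => //.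
move=> /= _ [_ [a ->] <-]; apply: measurableI => //; apply: is_interval_measurable.
move=> s t /= + _ u /andP[su _]; rewrite !in_itv /= !andbT => Fs.
exact: lt_le_trans Fs (legendre_nondecreasing su).
Qed.

End legendre.

Section probability_integral.
Context {R : realType} {d : measure_display} {T : measurableType d}.
Local Open Scope ereal_scope.

Lemma measurable_le_integral (mu : {measure set T -> \bar R}) (F G : T -> \bar R) :
  measurable_fun [set: T] F -> measurable_fun [set: T] G ->
  (forall x, F x <= G x) -> \int[mu]_x F x <= \int[mu]_x G x.
Proof.
move=> mF mG FG; rewrite [leLHS]integralE [leRHS]integralE.
have FGT : {in [set: T], forall x, F x <= G x} by move=> x _; exact: FG.
apply: leeB; apply: ge0_le_integral => //.
- exact: measurable_funepos.
- exact: measurable_funepos.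
- by move=> x _; apply: funepos_le FGT _ _; rewrite in_setT.
- exact: measurable_funeneg.
- exact: measurable_funeneg.
- by move=> x _; apply: funeneg_le FGT _ _; rewrite in_setT.
Qed.

Variable mu : probability T R.

Lemma probability_integral_cst (c : R) : \int[mu]_x c%:E = c%:E.
Proof. by rewrite integral_cst//= probability_setT mule1. Qed.

Lemma integralD_cst (F : T -> \bar R) (c : R) :
  measurable_fun [set: T] F -> (forall x, (- c)%:E <= F x) ->
  \int[mu]_x (F x + c%:E) = \int[mu]_x F x + c%:E.
Proof.
move=> mF Fc.
have Fc0 x : 0 <= F x + c%:E by rewrite -leeBlDr// sub0e -EFinN Fc.
have mFc : measurable_fun [set: T] (fun x => F x + c%:E) by exact: emeasurable_funD.
have [c0|c0] := leP 0%R c; last first.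
  have : \int[mu]_x ((F x + c%:E) + (- c)%:E) = \int[mu]_x (F x + c%:E) + (- c)%:E.
    rewrite ge0_integralD// ?probability_integral_cst// => x _.
    by rewrite lee_fin oppr_ge0 ltW.
  under eq_integral do rewrite -addeA -EFinD subrr adde0.
  by move=> ->; rewrite -addeA -EFinD addNr adde0.
have Fneg_le x : F^\- x <= c%:E.
  by rewrite funenegE ge_max lee_fin c0 andbT leeNl -EFinN Fc.
have Fneg_fin x : F^\- x \is a fin_num.
  by rewrite ge0_fin_numE// (le_lt_trans (Fneg_le x)) ?ltry.
have intFneg_fin : \int[mu]_x F^\- x \is a fin_num.
  rewrite ge0_fin_numE ?integral_ge0// (@le_lt_trans _ _ c%:E) ?ltry//.
  rewrite -probability_integral_cst; apply: ge0_le_integral => //.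
  exact: measurable_funeneg.
have FposE x : F^\+ x + c%:E = (F x + c%:E) + F^\- x.
  have -> : F x = F^\+ x - F^\- x by rewrite [in LHS](funeposneg F).
  by rewrite addeAC subeK.
have : \int[mu]_x (F^\+ x + c%:E) = \int[mu]_x ((F x + c%:E) + F^\- x).
  by apply: eq_integral => x _; exact: FposE.
rewrite ge0_integralD//; last exact: measurable_funepos.
rewrite ge0_integralD//; last exact: measurable_funeneg.
rewrite probability_integral_cst => E.
by rewrite [in RHS]integralE -[LHS](addeK _ intFneg_fin) -E addeAC.
Qed.

Lemma Mb_integrable (g : T -> R) : Mb g -> mu.-integrable [set: T] (EFin \o g).
Proof.
case=> mg [M gM]; apply: measurable_bounded_integrable => //=.
  by rewrite probability_setT ltry.
exists M; split; first exact: num_real.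
by move=> r Mr x _; exact/(le_trans (gM x))/ltW.
Qed.

Lemma jensen_affine_minorant (h : T -> R) (m a b : R) (phi : R -> \bar R) :
  mu.-integrable [set: T] (EFin \o h) -> \int[mu]_x (h x)%:E = m%:E ->
  measurable_fun [set: T] (phi \o h) -> (forall y, (a * y + b)%:E <= phi y) ->
  (a * m + b)%:E <= \int[mu]_x phi (h x).
Proof.
move=> ih hm mphi affine_le.
have mh : measurable_fun [set: T] h.
  by apply/measurable_EFinP; exact: measurable_int ih.
have -> : (a * m + b)%:E = \int[mu]_x (a * h x + b)%:E.
  under eq_integral do rewrite EFinD EFinM.
  rewrite integralD//; last 2 first.
  - exact: integrableZl.
  - exact: finite_measure_integrable_cst.
  by rewrite integralZl// hm probability_integral_cst -EFinM -EFinD.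
apply: measurable_le_integral => //.
by apply/measurable_EFinP; apply: measurable_funD => //; exact: measurable_funM.
Qed.

Lemma legendre_jensen (f : R -> R) (h : T -> R) (m : R) :
  mu.-integrable [set: T] (EFin \o h) -> \int[mu]_x (h x)%:E = m%:E ->
  legendre f m <= \int[mu]_x legendre f (h x).
Proof.
move=> ih hm; apply: ge_ereal_sup => _ [t /= t0 <-].
apply: (jensen_affine_minorant ih hm) => [|y]; last exact: legendre_ge.
apply: measurableT_comp (measurable_legendre f) _.
by apply/measurable_EFinP; exact: measurable_int ih.
Qed.

Lemma expR_jensen (h : T -> R) (m : R) :
  mu.-integrable [set: T] (EFin \o h) -> \int[mu]_x (h x)%:E = m%:E ->
  (expR m)%:E <= \int[mu]_x (expR (h x))%:E.
Proof.
move=> ih hm.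
(* the tangent line of expR at m *)
have -> : (expR m = expR m * m + expR m * (1 - m))%R.
  by rewrite -mulrDr addrC subrK mulr1.
apply: (jensen_affine_minorant (phi := fun y => (expR y)%:E) ih hm) => [|y].
  apply/measurable_EFinP; apply: measurableT_comp => //.
  by apply/measurable_EFinP; exact: measurable_int ih.
have -> : expR y = (expR m * expR (y - m))%R by rewrite -expRD addrC subrK.
by rewrite lee_fin -mulrDr ler_wpM2l ?expR_ge0// addrCA expR_ge1Dx.
Qed.

End probability_integral.

Section probability_kernel.
Context {R : realType} {d : measure_display} {T : measurableType d}.
Variable K : R.-pker T ~> T.
Local Open Scope ereal_scope.

(* [K x] is not canonically a probability measure; [pker_prob x] is the same
   set function with that structure, and integrals against both are
   convertible. *)
Definition pker_prob (x : T) : set T -> \bar R := K x.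
HB.instance Definition _ x := Measure.on (pker_prob x).
HB.instance Definition _ x :=
  Measure_isProbability.Build _ _ _ (pker_prob x) (@prob_kernel _ _ _ _ _ K x).

Lemma measurable_pker_integral (F : T -> \bar R) : measurable_fun [set: T] F ->
  measurable_fun [set: T] (fun x => \int[K x]_y F y).
Proof.
move=> mF; under eq_fun do rewrite integralE.
apply: emeasurable_funB; apply: measurable_fun_integral_kernel => //.
- exact: measurable_kernel.
- exact: measurable_funepos.
- exact: measurable_kernel.
- exact: measurable_funeneg.
Qed.

Lemma pker_integral_SK (g : T -> R) x : Mb g -> \int[K x]_y (g y)%:E = (SK K g x)%:E.
Proof.
move=> Mg; rewrite /SK fineK//.
exact: integrable_fin_num (Mb_integrable (pker_prob x) Mg).
Qed.

Lemma measurable_SK (g : T -> R) : Mb g -> measurable_fun [set: T] (SK K g).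
Proof.
case=> mg _; apply: measurableT_comp => //.
by apply: measurable_pker_integral; exact/measurable_EFinP.
Qed.

Variable P : probability T R.
Hypothesis HP : stationary K P.

Lemma stationary_ge0_integral (F : T -> \bar R) :
  measurable_fun [set: T] F -> (forall x, 0 <= F x) ->
  \int[P]_x \int[K x]_y F y = \int[P]_x F x.
Proof.
move=> mF F0.
have mK : measurable_fun [set: T] (fun x => pker_prob x : giry T R).
  by apply: measurable_giry_codensity => // B mB; exact: measurable_kernel.
(* stationarity says exactly that P >>= K agrees with P *)
have bindE A : measurable A -> giry_bind P mK A = P A.
  move=> mA; rewrite -[in LHS](setIT A) -integral_indic//.
  rewrite -[LHS]/(giry_int _ _) giry_int_bind//; last exact/measurable_EFinP.
  rewrite /giry_int; under eq_integral do rewrite integral_indic// setIT.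
  exact: HP.
transitivity (giry_int (giry_bind P mK) F); first by rewrite giry_int_bind.
by apply: eq_measure_integral => A mA _; exact: bindE.
Qed.

Lemma stationary_integral (F : T -> \bar R) (c : R) :
  measurable_fun [set: T] F -> (forall x, (- c)%:E <= F x) ->
  \int[P]_x \int[K x]_y F y = \int[P]_x F x.
Proof.
move=> mF Fc.
have mFc : measurable_fun [set: T] (fun x => F x + c%:E) by exact: emeasurable_funD.
have Fc0 x : 0 <= F x + c%:E by rewrite -leeBlDr// sub0e -EFinN Fc.
have KFc x : \int[K x]_y F y = \int[K x]_y (F y + c%:E) - c%:E.
  by rewrite (integralD_cst (pker_prob x) mF Fc) addeK.
under eq_integral do rewrite KFc.
rewrite -[LHS](@addeK _ c%:E _ isT) -integralD_cst; last 2 first.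
- by apply: emeasurable_funB => //; exact: measurable_pker_integral.
- by move=> x; rewrite EFinN -[leLHS]add0e leeD2r// integral_ge0.
under eq_integral do rewrite subeK//.
by rewrite stationary_ge0_integral// integralD_cst// addeK.
Qed.

Lemma stationary_SK (g : T -> R) : Mb g ->
  \int[P]_x (SK K g x)%:E = \int[P]_x (g x)%:E.
Proof.
move=> Mg; have [mg [M gM]] := Mg.
under eq_integral do rewrite -pker_integral_SK//.
apply: (stationary_integral (c := M)); first exact/measurable_EFinP.
by move=> x; rewrite lee_fin; move: (gM x); rewrite ler_norml => /andP[].
Qed.

Lemma legendre_SK_le_pker (f : R -> R) (g : T -> R) (nu : R) x : Mb g ->
  legendre f (SK K g x - nu) <= \int[K x]_y legendre f (g y - nu).
Proof.
move=> Mg.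
have ig := Mb_integrable (pker_prob x) Mg.
have inu := finite_measure_integrable_cst (pker_prob x) nu (@measurableT _ T).
rewrite -/(pker_prob x); apply: legendre_jensen.
  apply: (eq_integrable measurableT (fun y => (g y)%:E - nu%:E)).
    by move=> y _; rewrite /= EFinB.
  exact: integrableB.
under eq_integral do rewrite EFinB.
by rewrite integralB_EFin// pker_integral_SK// probability_integral_cst.
Qed.

Lemma legendre_SK_stationary_le (f : R -> R) (g : T -> R) (nu : R) : Mb g ->
  \int[P]_x legendre f (SK K g x - nu) <= \int[P]_x legendre f (g x - nu).
Proof.
move=> Mg; have [mg _] := Mg.
have mL (u : T -> R) : measurable_fun [set: T] u ->
    measurable_fun [set: T] (fun x => legendre f (u x - nu)).
  move=> mu; apply: measurableT_comp (measurable_legendre f) _.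
  exact: measurable_funB.
rewrite -(stationary_integral (c := f 0%R) (mL _ mg)) => [|y]; last first.
  exact: legendre_ge_f0.
apply: measurable_le_integral => [||x]; last exact: legendre_SK_le_pker.
- exact/mL/measurable_SK.
- exact/measurable_pker_integral/mL.
Qed.

Lemma expR_SK_le_pker (a cc : T -> R) (b eps : R) x : Mb a ->
  measurable_fun [set: T] cc -> (forall y, 0 <= cc y)%R ->
  \int[K x]_y (cc y)%:E = (cc x)%:E ->
  (expR ((SK K a x + b - cc x) / eps))%:E <=
  \int[K x]_y (expR ((a y + b - cc y) / eps))%:E.
Proof.
move=> Ma mc c0; rewrite -/(pker_prob x) => ccx.
have ia := Mb_integrable (pker_prob x) Ma.
have ib := finite_measure_integrable_cst (pker_prob x) b (@measurableT _ T).
have ic : (pker_prob x).-integrable [set: T] (EFin \o cc).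
  apply/integrableP; split; first exact/measurable_EFinP.
  under eq_integral do rewrite /= ger0_norm//.
  by rewrite ccx ltry.
have iabc := integrableB measurableT (integrableD measurableT ia ib) ic.
have hE : (fun y => ((a y + b - cc y) / eps)%:E) =
    (fun y => (((EFin \o a) \+ (EFin \o cst b)) y - (EFin \o cc) y)
              * (eps^-1)%:E).
  by apply/funext => y; rewrite /= EFinM EFinB EFinD.
have ih : (pker_prob x).-integrable [set: T]
    (fun y => ((a y + b - cc y) / eps)%:E).
  by rewrite hE; exact: integrableZr.
apply: (expR_jensen (h := fun y => ((a y + b - cc y) / eps)%R) ih).
rewrite hE integralZr// integralB//; last exact: integrableD.
rewrite integralD// probability_integral_cst ccx.
have -> : \int[pker_prob x]_y (EFin \o a) y = (SK K a x)%:E.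
  exact: pker_integral_SK.
by rewrite -EFinD -EFinM.
Qed.

Lemma expR_SK_stationary_le (a cc : T -> R) (b eps : R) : Mb a ->
  measurable_fun [set: T] cc -> (forall y, 0 <= cc y)%R -> SK_fixed K cc ->
  \int[P]_x (expR ((SK K a x + b - cc x) / eps))%:E <=
  \int[P]_x (expR ((a x + b - cc x) / eps))%:E.
Proof.
move=> Ma mc c0 ccfix; have [ma _] := Ma.
have mexp (u : T -> R) : measurable_fun [set: T] u ->
    measurable_fun [set: T] (fun x => (expR ((u x + b - cc x) / eps))%:E).
  move=> mu; apply/measurable_EFinP; apply: measurableT_comp => //.
  by apply: measurable_funM => //; apply: measurable_funB => //; exact: measurable_funD.
rewrite -[leRHS]stationary_ge0_integral//; last exact: mexp.
apply: measurable_le_integral => [||x]; last exact: expR_SK_le_pker.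
- exact/mexp/measurable_SK.
- exact/measurable_pker_integral/mexp.
Qed.

End probability_kernel.

Section entropic_cost.
Context {R : realType} {d : measure_display} {T : measurableType d}.
Variables (K : R.-pker T ~> T) (c : T * T -> R) (eps : R).
Hypotheses (mc : measurable_fun [set: T * T] c) (c_ge0 : forall z, (0 <= c z)%R)
  (c_fixl : forall y, SK_fixed K (fun x => c (x, y)))
  (c_fixr : forall x, SK_fixed K (fun y => c (x, y))).
Local Open Scope ereal_scope.

Let expc (A B : T -> R) (z : T * T) := (expR ((A z.1 + B z.2 - c z) / eps))%:E.

Let measurable_expc A B : measurable_fun [set: T] A -> measurable_fun [set: T] B ->
  measurable_fun [set: T * T] (expc A B).
Proof.
move=> mA mB; apply/measurable_EFinP; apply: measurableT_comp => //.
apply: measurable_funM => //; apply: measurable_funB => //.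
by apply: measurable_funD; apply: measurableT_comp.
Qed.

Let expc_ge0 A B z : 0 <= expc A B z.
Proof. by rewrite lee_fin expR_ge0. Qed.

Lemma SK_product_expR_le (P Q : probability T R) (p1 p2 : T -> R) :
  stationary K P -> stationary K Q -> Mb p1 -> Mb p2 ->
  \int[P \x Q]_z (expR ((SK K p1 z.1 + SK K p2 z.2 - c z) / eps))%:E <=
  \int[P \x Q]_z (expR ((p1 z.1 + p2 z.2 - c z) / eps))%:E.
Proof.
move=> HP HQ M1 M2; have [m1 _] := M1; have [m2 _] := M2.
have ms1 := measurable_SK K M1; have ms2 := measurable_SK K M2.
have mcl y : measurable_fun [set: T] (fun x => c (x, y)).
  exact: measurableT_comp mc (pair2_measurable y).
have mcr x : measurable_fun [set: T] (fun y => c (x, y)).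
  exact: measurableT_comp mc (pair1_measurable x).
apply: (@le_trans _ _ (\int[P \x Q]_z expc p1 (SK K p2) z)).
  rewrite (fubini_tonelli2 _ (measurable_expc ms1 ms2) (@expc_ge0 _ _)).
  rewrite (fubini_tonelli2 _ (measurable_expc m1 ms2) (@expc_ge0 _ _)).
  apply: ge0_le_integral => //.
  - by move=> y _; exact: integral_ge0.
  - exact: measurable_fun_fubini_tonelli_G (measurable_expc ms1 ms2) _.
  - exact: measurable_fun_fubini_tonelli_G (measurable_expc m1 ms2) _.
  move=> y _; apply: (expR_SK_stationary_le HP (SK K p2 y) eps M1 (mcl y)).
  - by move=> x; exact: c_ge0.
  - exact: c_fixl.
rewrite (fubini_tonelli1 _ (measurable_expc m1 ms2) (@expc_ge0 _ _)).
rewrite (fubini_tonelli1 _ (measurable_expc m1 m2) (@expc_ge0 _ _)).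
apply: ge0_le_integral => //.
- by move=> x _; exact: integral_ge0.
- exact: measurable_fun_fubini_tonelli_F (measurable_expc m1 ms2) _.
- exact: measurable_fun_fubini_tonelli_F (measurable_expc m1 m2) _.
move=> x _; rewrite /fubini_F /expc /=.
under eq_integral do rewrite (addrC (p1 x)).
under [leRHS]eq_integral do rewrite (addrC (p1 x)).
apply: (expR_SK_stationary_le HQ (p1 x) eps M2 (mcr x)).
- by move=> y; exact: c_ge0.
- exact: c_fixr.
Qed.

Lemma Wce_SK2_image (G : set ((T -> R) * (T -> R))) (Q P : probability T R) :
  (0 <= eps)%R -> stationary K Q -> stationary K P ->
  G `<=` @Mb2 R _ T -> SK2 K @` G `<=` G ->
  Wce c eps G Q P = Wce c eps (SK2 K @` G) Q P.
Proof.
move=> eps0 HQ HP GMb2 SG; apply: ereal_sup_image_improving => // p Gp.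
have [M1 M2] := GMb2 p Gp.
rewrite /SK2 /= (stationary_SK HP M1) (stationary_SK HQ M2).
apply: leeD2r; apply: leeB => //; apply: lee_wpmul2l; first by rewrite lee_fin.
exact: SK_product_expR_le.
Qed.

Lemma SD_SK2_image (G : set ((T -> R) * (T -> R))) (Q P : probability T R) :
  (0 <= eps)%R -> stationary K Q -> stationary K P ->
  G `<=` @Mb2 R _ T -> SK2 K @` G `<=` G ->
  SD c eps G Q P = SD c eps (SK2 K @` G) Q P.
Proof.
move=> eps0 HQ HP GMb2 SG.
by rewrite /SD !(Wce_SK2_image eps0 _ _ GMb2 SG).
Qed.

End entropic_cost.

Section divergences.
Context {R : realType} {d : measure_display} {T : measurableType d}.
Variables (K : R.-pker T ~> T) (Q P : probability T R).
Hypotheses (HQ : stationary K Q) (HP : stationary K P).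
Local Open Scope ereal_scope.

Lemma Df_SK_image (f : R -> R) (G : set (T -> R)) :
  G `<=` @Mb R _ T -> SK K @` G `<=` G -> Df f G Q P = Df f (SK K @` G) Q P.
Proof.
move=> GMb SG; apply: ereal_sup_image_improving => // g Gg.
have Mg := GMb g Gg.
rewrite (stationary_SK HQ Mg); apply: leeB => //.
apply: le_ereal_inf_tmp => _ [nu _ <-]; apply: ge_ereal_inf.
exists (nu%:E + \int[P]_x legendre f (SK K g x - nu)); first by exists nu.
by rewrite leeD2l// legendre_SK_stationary_le.
Qed.

Lemma IPM_SK_image (G : set (T -> R)) :
  G `<=` @Mb R _ T -> SK K @` G `<=` G -> IPM G Q P = IPM (SK K @` G) Q P.
Proof.
move=> GMb SG; apply: ereal_sup_image_improving => // g Gg.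
by rewrite (stationary_SK HQ (GMb g Gg)) (stationary_SK HP (GMb g Gg)).
Qed.

End divergences.

Theorem theorem3 (R : realType) (d : measure_display) (T : measurableType d)
    (K : R.-pker T ~> T) (Q P : probability T R)
    (HQ : stationary K Q) (HP : stationary K P) :
  (* (i) *)
  (forall f : R -> R, fdiv_admissible f ->
   forall G : set (T -> R), G `<=` (@Mb R _ T) -> SK K @` G `<=` G ->
     Df f G Q P = Df f (SK K @` G) Q P) /\
  (forall G : set (T -> R), G `<=` (@Mb R _ T) -> SK K @` G `<=` G ->
     IPM G Q P = IPM (SK K @` G) Q P) /\
  (* (ii) *)
  (forall (c : T * T -> R) (eps : R), 0 < eps ->
   measurable_fun setT c -> (forall z, 0 <= c z) ->
   (forall y, SK_fixed K (fun x => c (x, y))) ->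
   (forall x, SK_fixed K (fun y => c (x, y))) ->
   forall G : set ((T -> R) * (T -> R)), G `<=` (@Mb2 R _ T) -> SK2 K @` G `<=` G ->
     SD c eps G Q P = SD c eps (SK2 K @` G) Q P) /\
  (* (iii) *)
  (forall G : set (T -> R), G `<=` (@Mb R _ T) ->
   (forall g : T -> R, (@Mb R _ T) g -> SK K (SK K g) = SK K g) -> SK K @` G `<=` G ->
     SK K @` G = [set g | G g /\ SK K g = g]) /\
  (forall G : set ((T -> R) * (T -> R)), G `<=` (@Mb2 R _ T) ->
   (forall g : T -> R, (@Mb R _ T) g -> SK K (SK K g) = SK K g) -> SK2 K @` G `<=` G ->
     SK2 K @` G = [set p | G p /\ SK2 K p = p]).
Proof.
split; first by move=> f _ G; exact: Df_SK_image.
split; first exact: IPM_SK_image.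
split.
  move=> c eps eps0 mc c_ge0 c_fixl c_fixr G.
  exact: (SD_SK2_image mc c_ge0 c_fixl c_fixr (ltW eps0)).
split=> G GMb idem SG; apply: image_idem_fixed => // g Gg.
- exact: idem (GMb g Gg).
- have [M1 M2] := GMb g Gg.
  by rewrite /SK2 /= (idem _ M1) (idem _ M2).
Qed.
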